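(* Let $A$ be a noetherian ring and $M$ a finitely generated $A$-module. Suppose that there is an injective flat ring homomorphism $A\to A'$ such that $M'=M\otimes_A A'$ is a locally free $A'$-module. Then the torsionless quotient $M^{tl}$ of $M$ is isomorphic to the image of the induced map $M\to M'$, $m\mapsto m\otimes 1$ (compatibly with the quotient maps from $M$).
   Context: For an $A$-module $M$, write $M^\ast=\operatorname{Hom}_A(M,A)$. The torsionless quotient $M^{tl}$ of $M$ is the image of the canonical map $M\to M^{\ast\ast}$; equivalently $M^{tl}=M/\bigcap_g\ker(g)$, where $g$ runs over all $A$-linear maps from $M$ to free $A$-modules. *)

From HB Require Import structures.
From mathcomp Require Import all_boot all_order all_algebra.
Set Implicit Arguments. Unset Strict Implicit. Unset Printing Implicit Defensive.
Import GRing.Theory.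
Local Open Scope ring_scope.

Section Defs.

Definition is_ideal (R : comPzRingType) (I : R -> Prop) : Prop :=
  [/\ I 0, (forall x y, I x -> I y -> I (x + y)) & (forall r x, I x -> I (r * x))].

Definition is_prime_ideal (R : comPzRingType) (P : R -> Prop) : Prop :=
  [/\ is_ideal P, ~ P 1 & (forall a b, P (a * b) -> P a \/ P b)].

Definition noetherian (R : comPzRingType) : Prop :=
  forall I : R -> Prop, is_ideal I ->
    exists s : seq R, forall x, I x <->
      exists c : nat -> R, x = \sum_(i < size s) c i * s`_i.

Definition fin_gen (R : comPzRingType) (M : lmodType R) : Prop :=
  exists s : seq M, forall m : M,
    exists c : nat -> R, m = \sum_(i < size s) c i *: s`_i.

Definition is_linear (R : comPzRingType) (M N : lmodType R) (h : M -> N) : Prop :=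
  (forall x y, h (x + y) = h x + h y) /\ (forall (r : R) x, h (r *: x) = r *: h x).

Definition is_semilinear (A A' : comPzRingType) (f : {rmorphism A -> A'})
    (M : lmodType A) (N : lmodType A') (h : M -> N) : Prop :=
  (forall x y, h (x + y) = h x + h y) /\ (forall (a : A) x, h (a *: x) = f a *: h x).

Definition free (R : comPzRingType) (N : lmodType R) : Prop :=
  exists (I : eqType) (e : I -> N),
    (forall n : N, exists (r : seq I) (c : I -> R), n = \sum_(i <- r) c i *: e i) /\
    (forall (r : seq I) (c : I -> R), uniq r ->
        \sum_(i <- r) c i *: e i = 0 -> forall i, i \in r -> c i = 0).

(* (M', j) is the base change M (x)_A A' with j m = m (x) 1, characterized
   by the universal property of extension of scalars. *)
Definition is_base_change (A A' : comPzRingType) (f : {rmorphism A -> A'})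
    (M : lmodType A) (M' : lmodType A') (j : M -> M') : Prop :=
  is_semilinear f j /\
  forall (N : lmodType A') (h : M -> N), is_semilinear f h ->
    (exists h' : M' -> N, is_linear h' /\ forall m, h' (j m) = h m) /\
    (forall h1 h2 : M' -> N, is_linear h1 -> is_linear h2 ->
       (forall m, h1 (j m) = h2 (j m)) -> forall x, h1 x = h2 x).

Definition flat (A A' : comPzRingType) (f : {rmorphism A -> A'}) : Prop :=
  forall (N1 N2 : lmodType A) (u : N1 -> N2), is_linear u -> injective u ->
  forall (N1' N2' : lmodType A') (j1 : N1 -> N1') (j2 : N2 -> N2'),
    is_base_change f j1 -> is_base_change f j2 ->
  forall u' : N1' -> N2', is_linear u' -> (forall n, u' (j1 n) = j2 (u n)) ->
    injective u'.

Definition is_localization_at (R B : comPzRingType) (P : R -> Prop)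
    (g : {rmorphism R -> B}) : Prop :=
  [/\ (forall s, ~ P s -> exists b, g s * b = 1),
      (forall b : B, exists a s, ~ P s /\ b * g s = g a)
    & (forall a, g a = 0 -> exists s, ~ P s /\ s * a = 0)].

Definition locally_free (R : comPzRingType) (M : lmodType R) : Prop :=
  forall P : R -> Prop, is_prime_ideal P ->
    exists (B : comPzRingType) (g : {rmorphism R -> B})
           (N : lmodType B) (j : M -> N),
      [/\ is_localization_at P g, is_base_change g j & free N].

Definition dual (A : comPzRingType) (M : lmodType A) := {scalar M}.

(* canonical map M -> M^** ; M^tl is its image *)
Definition bidual_ev (A : comPzRingType) (M : lmodType A) (m : M) :
  dual M -> A := fun g => g m.

End Defs.

(* If [iota m1 = iota m2] then [f (phi m1) = f (phi m2)] for every linear form [phi]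
   on [M], since [f \o phi] extends to [M']; so [m1] and [m2] have the same image in [M^tl].
   Conversely, assume every linear form takes the same value at [m1] and [m2]. The element
   [x := iota m1 - iota m2] of [M'] is zero as soon as it dies in every localization [M'_P]
   at a prime [P], since then its annihilator lies in no prime ideal. Each [M'_P] is free,
   so it is enough that [h m1 = h m2] for every [g \o f]-semilinear [h : M -> A'_P].
   Present [M] as a quotient of [A^p] with a relation matrix [R] (finite, as [A] is
   noetherian): linear forms on [M] are the rows [v] with [v R = 0]. Clearing denominators,
   [h] is a unit multiple of a row [w] over [A'] with [w R = 0], and flatness of [f] makes
   [w] an [A']-combination of images of rows [v] over [A] with [v R = 0], at which [m1]
   and [m2] agree. *)

From Pilot Require Import Defs.
From HB Require Import structures.
From mathcomp Require Import all_boot all_order all_algebra.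
From mathcomp Require Import boolp classical_sets ring.
Set Implicit Arguments. Unset Strict Implicit. Unset Printing Implicit Defensive.
Import GRing.Theory.
Local Open Scope ring_scope.

(** * Quotients by equivalence relations *)

Section Quotient.
Variables (T : Type) (E : T -> T -> Prop).
Hypotheses (E_refl : forall x, E x x) (E_sym : forall x y, E x y -> E y x)
  (E_trans : forall x y z, E x y -> E y z -> E x z).

Definition quot := {X : T -> Prop | exists x, X = E x}.
Definition class_of (x : T) : quot := exist _ (E x) (ex_intro _ x erefl).

Lemma class_ofE x y : class_of x = class_of y <-> E x y.
Proof.
split=> [exy|Exy].
  by have /= -> : sval (class_of x) = sval (class_of y) by rewrite exy.
apply: eq_exist_uncurried => /=.
have eE : E x = E y.
  by apply: funext => z; apply: propext; split; eauto.
by exists eE; apply: Prop_irrelevance.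
Qed.

Lemma class_of_surj (X : quot) : exists x, X = class_of x.
Proof.
case: X => X [x eX]; exists x; apply: eq_exist_uncurried.
by exists eX; apply: Prop_irrelevance.
Qed.

Definition class_repr (X : quot) : T := projT1 (cid (class_of_surj X)).

Lemma class_reprK : cancel class_repr class_of.
Proof. by move=> X; rewrite /class_repr; case: cid => x /= ->. Qed.

End Quotient.

Section Additive.
Variables (U V : zmodType) (h : U -> V).
Hypothesis hD : forall x y, h (x + y) = h x + h y.

Lemma additive0 : h 0 = 0.
Proof. by apply: (addrI (h 0)); rewrite -hD !addr0. Qed.

Lemma additiveN x : h (- x) = - h x.
Proof. by apply: (addrI (h x)); rewrite -hD !subrr additive0. Qed.

Lemma additiveB x y : h (x - y) = h x - h y.
Proof. by rewrite hD additiveN. Qed.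

Lemma additive_sum (I : Type) (r : seq I) (P : pred I) (F : I -> U) :
  h (\sum_(i <- r | P i) F i) = \sum_(i <- r | P i) h (F i).
Proof. exact: (big_morph h hD additive0). Qed.

End Additive.

Lemma is_linear_sum (R : comPzRingType) (M N : lmodType R) (h : M -> N) :
  is_linear h -> forall I (r : seq I) (P : pred I) (F : I -> M),
  h (\sum_(i <- r | P i) F i) = \sum_(i <- r | P i) h (F i).
Proof. by case=> hD _; exact: additive_sum. Qed.

Lemma is_semilinear_sum (A A' : comPzRingType) (f : {rmorphism A -> A'})
    (M : lmodType A) (N : lmodType A') (h : M -> N) :
  is_semilinear f h -> forall I (r : seq I) (P : pred I) (F : I -> M),
  h (\sum_(i <- r | P i) F i) = \sum_(i <- r | P i) h (F i).
Proof. by case=> hD _; exact: additive_sum. Qed.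

(** * Spans and quotient modules *)

Inductive lspan (R : pzRingType) (X : lmodType R) (G : X -> Prop) : X -> Prop :=
| lspan0 : lspan G 0
| lspan_gen x : G x -> lspan G x
| lspanD x y : lspan G x -> lspan G y -> lspan G (x + y)
| lspanZ (a : R) x : lspan G x -> lspan G (a *: x).

Lemma lspan_sum (R : pzRingType) (X : lmodType R) (G : X -> Prop)
    (I : Type) (r : seq I) (P : pred I) (F : I -> X) :
  (forall i, P i -> lspan G (F i)) -> lspan G (\sum_(i <- r | P i) F i).
Proof. by move=> GF; apply: big_ind => //; [exact: lspan0 | exact: lspanD]. Qed.

Lemma lspan_sub (R : pzRingType) (X : lmodType R) (G G' : X -> Prop) x :
  (forall y, G y -> G' y) -> lspan G x -> lspan G' x.
Proof. by move=> GG'; elim=> [|y /GG'|y z _ Hy _ Hz|a y _ Hy]; constructor. Qed.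

Lemma linear_lspan0 (R : pzRingType) (X Y : lmodType R) (G : X -> Prop) (h : X -> Y) :
  (forall x y, h (x + y) = h x + h y) -> (forall a x, h (a *: x) = a *: h x) ->
  (forall x, G x -> h x = 0) -> forall x, lspan G x -> h x = 0.
Proof.
move=> hD hZ hG x; elim=> [|y /hG //|y z _ hy _ hz|a y _ hy].
- exact: additive0.
- by rewrite hD hy hz addr0.
- by rewrite hZ hy scaler0.
Qed.

Record submod (R : pzRingType) (X : lmodType R) := Submod {
  submod_pred :> X -> Prop;
  submod0 : submod_pred 0;
  submodD : forall x y, submod_pred x -> submod_pred y -> submod_pred (x + y);
  submodZ : forall a x, submod_pred x -> submod_pred (a *: x) }.

Definition lspan_submod (R : pzRingType) (X : lmodType R) (G : X -> Prop) :=
  Submod (@lspan0 _ _ G) (@lspanD _ _ G) (@lspanZ _ _ G).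

Section QuotientModule.
Variables (R : comPzRingType) (X : lmodType R) (S : submod X).

Lemma submodN x : S x -> S (- x).
Proof. by move=> Sx; rewrite -scaleN1r; apply: submodZ. Qed.

Definition submod_rel (x y : X) := S (x - y).

Lemma submod_rel_refl x : submod_rel x x.
Proof. by rewrite /submod_rel subrr; apply: submod0. Qed.

Lemma submod_rel_sym x y : submod_rel x y -> submod_rel y x.
Proof. by move=> /submodN; rewrite /submod_rel opprB. Qed.

Lemma submod_rel_trans x y z : submod_rel x y -> submod_rel y z -> submod_rel x z.
Proof. by move=> Sxy Syz; have := submodD Sxy Syz; rewrite /submod_rel addrA subrK. Qed.

Definition qmod := quot submod_rel.
HB.instance Definition _ := gen_eqMixin qmod.
HB.instance Definition _ := gen_choiceMixin qmod.

Definition qproj (x : X) : qmod := class_of submod_rel x.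
Definition qrepr (u : qmod) : X := class_repr u.

Lemma qprojE x y : qproj x = qproj y <-> S (x - y).
Proof. exact: class_ofE submod_rel_refl submod_rel_sym submod_rel_trans x y. Qed.

Lemma qprojK u : qproj (qrepr u) = u.
Proof. exact: class_reprK. Qed.

Lemma qproj_surj u : exists x, u = qproj x.
Proof. by exists (qrepr u); rewrite qprojK. Qed.

Lemma qrepr_proj x : S (qrepr (qproj x) - x).
Proof. by apply/qprojE; rewrite qprojK. Qed.

Let qadd u v := qproj (qrepr u + qrepr v).
Let qopp u := qproj (- qrepr u).
Let qscale a u := qproj (a *: qrepr u).

Let qaddE x y : qadd (qproj x) (qproj y) = qproj (x + y).
Proof.
by apply/qprojE; have := submodD (qrepr_proj x) (qrepr_proj y); rewrite addrACA opprD.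
Qed.

Let qoppE x : qopp (qproj x) = qproj (- x).
Proof. by apply/qprojE; rewrite -opprD; apply/submodN/qrepr_proj. Qed.

Let qscaleE a x : qscale a (qproj x) = qproj (a *: x).
Proof. by apply/qprojE; rewrite -scalerBr; apply/submodZ/qrepr_proj. Qed.

Let qaddA : associative qadd.
Proof.
move=> u v w; case: (qproj_surj u) (qproj_surj v) (qproj_surj w) => [x ->] [y ->] [z ->].
by rewrite !qaddE addrA.
Qed.

Let qaddC : commutative qadd.
Proof.
by move=> u v; case: (qproj_surj u) (qproj_surj v) => [x ->] [y ->]; rewrite !qaddE addrC.
Qed.

Let qadd0 : left_id (qproj 0) qadd.
Proof. by move=> u; case: (qproj_surj u) => x ->; rewrite qaddE add0r. Qed.

Let qaddN : left_inverse (qproj 0) qopp qadd.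
Proof. by move=> u; case: (qproj_surj u) => x ->; rewrite qoppE qaddE addNr. Qed.

HB.instance Definition _ := GRing.isZmodule.Build qmod qaddA qaddC qadd0 qaddN.

Lemma qprojD x y : qproj (x + y) = qproj x + qproj y.
Proof. exact: (esym (qaddE x y)). Qed.

Let qscaleA a b u : qscale a (qscale b u) = qscale (a * b) u.
Proof. by case: (qproj_surj u) => x ->; rewrite !qscaleE scalerA. Qed.

Let qscale1 : left_id 1 qscale.
Proof. by move=> u; case: (qproj_surj u) => x ->; rewrite qscaleE scale1r. Qed.

Let qscaleDr : right_distributive qscale +%R.
Proof.
move=> a u v; case: (qproj_surj u) (qproj_surj v) => [x ->] [y ->].
by rewrite -qprojD !qscaleE -qprojD scalerDr.
Qed.

Let qscaleDl u : {morph qscale^~ u : a b / a + b}.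
Proof. by move=> a b; case: (qproj_surj u) => x ->; rewrite !qscaleE -qprojD scalerDl. Qed.

HB.instance Definition _ :=
  GRing.Zmodule_isLmodule.Build R qmod qscaleA qscale1 qscaleDr qscaleDl.

Lemma qprojZ a x : qproj (a *: x) = a *: qproj x.
Proof. exact: (esym (qscaleE a x)). Qed.

Lemma qproj_eq0 x : qproj x = 0 <-> S x.
Proof. by have := qprojE x 0; rewrite subr0. Qed.

Section Descent.
Variables (Y : lmodType R) (h : X -> Y).
Hypotheses (hD : forall x y, h (x + y) = h x + h y)
  (hZ : forall a x, h (a *: x) = a *: h x) (hS : forall x, S x -> h x = 0).

Definition qdesc (u : qmod) := h (qrepr u).

Lemma qdescE x : qdesc (qproj x) = h x.
Proof. by apply/eqP; rewrite -subr_eq0 -(additiveB hD) hS //; apply: qrepr_proj. Qed.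

Lemma qdesc_linear : is_linear qdesc.
Proof.
split=> [u v|a u].
  by case: (qproj_surj u) (qproj_surj v) => [x ->] [y ->]; rewrite -qprojD !qdescE hD.
by case: (qproj_surj u) => x ->; rewrite -qprojZ !qdescE hZ.
Qed.

End Descent.
End QuotientModule.

(** * Noetherian rings *)

Section Noetherian.
Variables (A : comPzRingType) (HA : noetherian A).

Lemma noetherian_ideal_gen (I : A -> Prop) : is_ideal I ->
  exists t : seq A, (forall x, x \in t -> I x) /\
    forall x, I x -> exists c : nat -> A, x = \sum_(i < size t) c i * t`_i.
Proof.
move=> Iid; have [t It] := HA Iid; exists t; split=> [x /(nthP 0) [k kt <-]|x /It //].
apply/It; exists (fun i => (i == k)%:R).
rewrite (bigD1 (Ordinal kt)) //= eqxx mul1r big1 ?addr0 // => i.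
by rewrite -val_eqE /= => /negPf ->; rewrite mul0r.
Qed.

Lemma submod_coord_lift p (S : submod 'cV[A]_p) (k : 'I_p) :
  exists U : seq 'cV[A]_p, (forall u, u \in U -> S u) /\ forall v, S v ->
    exists2 z, lspan (fun u => u \in U) z & S (v - z) /\ (v - z) k 0 = 0.
Proof.
pose I a := exists v, S v /\ v k 0 = a.
have Iid : is_ideal I.
  split; first by exists 0; rewrite mxE; split=> //; apply: submod0.
    by move=> _ _ [v [Sv <-]] [w [Sw <-]]; exists (v + w); rewrite mxE; split=> //; apply: submodD.
  by move=> r _ [v [Sv <-]]; exists (r *: v); rewrite mxE; split=> //; apply: submodZ.
have [t [tI It]] := noetherian_ideal_gen Iid.
have [lift liftP] : {lift : A -> 'cV[A]_p & forall a, I a -> S (lift a) /\ lift a k 0 = a}.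
  apply: (choice (P := fun a u => I a -> S u /\ u k 0 = a)) => a.
  by case: (lem (I a)) => [[u Su]|nIa]; [exists u | exists 0].
have liftt (i : 'I_(size t)) : S (lift t`_i) /\ lift t`_i k 0 = t`_i.
  exact/liftP/tI/mem_nth.
exists (map lift t); split=> [_ /mapP [a /tI /liftP [Su _] ->] // | v Sv].
have [c vc] := It _ (ex_intro _ v (conj Sv erefl)).
pose z := \sum_(i < size t) c i *: lift t`_i.
have Sz : S z.
  apply: big_ind => [|x y|i _]; [exact: submod0 | exact: submodD |].
  by apply: submodZ; case: (liftt i).
exists z; first by apply: lspan_sum => i _; apply/lspanZ/lspan_gen; rewrite map_f // mem_nth.
split; first by apply: submodD => //; apply: submodN.
rewrite !mxE vc summxE -sumrB big1 // => i _.
by rewrite mxE (proj2 (liftt i)) subrr.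
Qed.

Lemma noetherian_submod_supp p n (S : submod 'cV[A]_p) : (n <= p)%N ->
  (forall v, S v -> forall i : 'I_p, (n <= i)%N -> v i 0 = 0) ->
  exists G : seq 'cV[A]_p, (forall g, g \in G -> S g) /\
    forall v, S v -> lspan (fun g => g \in G) v.
Proof.
elim: n S => [|n IHn] S np Ssupp.
  exists [::]; split=> // v /Ssupp v0.
  have -> : v = 0 by apply/matrixP => i j; rewrite ord1 mxE v0.
  exact: lspan0.
pose k := Ordinal np.
have [U [US Ulift]] := submod_coord_lift S k.
have S'0 : S 0 /\ (0 : 'cV[A]_p) k 0 = 0 by rewrite mxE; split=> //; apply: submod0.
have S'D x y : S x /\ x k 0 = 0 -> S y /\ y k 0 = 0 -> S (x + y) /\ (x + y) k 0 = 0.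
  by move=> [Sx x0] [Sy y0]; rewrite mxE x0 y0 addr0; split=> //; apply: submodD.
have S'Z a x : S x /\ x k 0 = 0 -> S (a *: x) /\ (a *: x) k 0 = 0.
  by move=> [Sx x0]; rewrite mxE x0 mulr0; split=> //; apply: submodZ.
have S'supp v : S v /\ v k 0 = 0 -> forall i : 'I_p, (n <= i)%N -> v i 0 = 0.
  move=> [Sv vk] i; rewrite leq_eqVlt => /orP[/eqP ni|]; last exact: Ssupp.
  by have -> : i = k by apply: val_inj.
have [G0 [G0S' G0span]] := IHn (Submod S'0 S'D S'Z) (ltnW np) S'supp.
exists (G0 ++ U); split=> [g|v Sv]; first by rewrite mem_cat => /orP[/G0S' [] | /US].
have [z zU S'vz] := Ulift v Sv.
rewrite -(subrK z v); apply: lspanD.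
  by apply: lspan_sub (G0span _ S'vz) => g gG0; rewrite mem_cat gG0.
by apply: lspan_sub zU => u uU; rewrite mem_cat uU orbT.
Qed.

Lemma noetherian_submod_cV p (S : submod 'cV[A]_p) :
  exists G : seq 'cV[A]_p, (forall g, g \in G -> S g) /\
    forall v, S v -> lspan (fun g => g \in G) v.
Proof. by apply: (noetherian_submod_supp (leqnn p)) => v _ i; rewrite leqNgt ltn_ord. Qed.

End Noetherian.

(** * Finite presentations *)

Section ScalarOf.
Variables (A : comPzRingType) (M : lmodType A) (phi : M -> A).
Hypotheses (phiD : forall x y, phi (x + y) = phi x + phi y)
  (phiZ : forall a x, phi (a *: x) = a * phi x).

Let phi_linear : GRing.linear_for *%R phi.
Proof. by move=> a x y; rewrite phiD phiZ. Qed.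

HB.instance Definition _ := GRing.isLinear.Build A M A *%R phi phi_linear.

Definition scalar_of : {scalar M} := phi.

End ScalarOf.

Section Presentation.
Variables (A : comPzRingType) (M : lmodType A) (p : nat) (e : 'I_p -> M).

Definition gencomb (c : 'cV[A]_p) : M := \sum_(i < p) c i 0 *: e i.

Lemma gencombD c d : gencomb (c + d) = gencomb c + gencomb d.
Proof. by rewrite /gencomb -big_split; apply: eq_bigr => i _; rewrite mxE scalerDl. Qed.

Lemma gencombZ a c : gencomb (a *: c) = a *: gencomb c.
Proof. by rewrite /gencomb scaler_sumr; apply: eq_bigr => i _; rewrite mxE scalerA. Qed.

Lemma relation_matrix : noetherian A ->
  exists q (R : 'M[A]_(p, q)), (forall j, gencomb (col j R) = 0) /\
    forall c, gencomb c = 0 -> lspan (fun r => exists j, r = col j R) c.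
Proof.
move=> HA.
have rel0 : gencomb 0 = 0 by rewrite /gencomb big1 // => i _; rewrite mxE scale0r.
have relD c d : gencomb c = 0 -> gencomb d = 0 -> gencomb (c + d) = 0.
  by rewrite gencombD => -> ->; rewrite addr0.
have relZ a c : gencomb c = 0 -> gencomb (a *: c) = 0 by rewrite gencombZ => ->; rewrite scaler0.
have [G [G_rel G_span]] := noetherian_submod_cV HA (Submod rel0 relD relZ).
pose R := \matrix_(i < p, j < size G) G`_j i 0.
have colR (j : 'I_(size G)) : col j R = G`_j by apply/matrixP => i k; rewrite ord1 !mxE.
exists (size G), R; split=> [j|c /G_span].
  by rewrite colR; apply: G_rel; exact: mem_nth.
apply: lspan_sub => _ /(nthP 0) [j jG <-].
by exists (Ordinal jG); rewrite colR.
Qed.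

Variables (q : nat) (R : 'M[A]_(p, q)).
Hypotheses (e_span : forall m, exists c, m = gencomb c)
  (R_span : forall c, gencomb c = 0 -> lspan (fun r => exists j, r = col j R) c).

Lemma lker_rel_eq0 (v : 'rV[A]_p) c : v *m R = 0 -> gencomb c = 0 -> v *m c = 0.
Proof.
move=> vR /R_span; apply: linear_lspan0 => [x y|a x|_ [j ->]].
- exact: mulmxDr.
- by rewrite scalemxAr.
- by rewrite colE mulmxA -colE vR; apply/matrixP => i k; rewrite !mxE.
Qed.

(* Every [v] with [v *m R = 0] defines the linear form [gencomb c |-> v *m c] on [M]. *)
Lemma lker_scalar_eq m1 m2 : (forall phi : {scalar M}, phi m1 = phi m2) ->
  forall (v : 'rV[A]_p) c, v *m R = 0 -> gencomb c = m1 - m2 -> v *m c = 0.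
Proof.
move=> phi_eq v c vR c12.
have [coords coordsK] : {coords : M -> 'cV[A]_p & forall m, gencomb (coords m) = m}.
  by apply: (choice (P := fun m c => gencomb c = m)) => m; have [c' ->] := e_span m; exists c'.
pose phi m := (v *m coords m) 0 0.
have phiE c' : phi (gencomb c') = (v *m c') 0 0.
  have : v *m (coords (gencomb c') - c') = 0.
    by apply: lker_rel_eq0 => //; rewrite gencombD (additiveN gencombD) coordsK subrr.
  by rewrite mulmxBr => /eqP; rewrite subr_eq0 => /eqP; rewrite /phi => ->.
have phiD x y : phi (x + y) = phi x + phi y.
  by rewrite -{1}(coordsK x) -{1}(coordsK y) -gencombD phiE mulmxDr mxE.
have phiZ a x : phi (a *: x) = a * phi x.
  by rewrite -{1}(coordsK x) -gencombZ phiE -scalemxAr mxE.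
have phi12 : phi m1 = phi m2 := phi_eq (scalar_of phiD phiZ).
apply/matrixP => i j; rewrite !ord1 [RHS]mxE -phiE c12 (additiveB phiD) phi12.
exact: subrr.
Qed.

End Presentation.

(** * Flat base change of kernels *)

Section RowBaseChange.
Variables (A A' : comPzRingType) (f : {rmorphism A -> A'}) (n : nat).

Definition row_ext (N : lmodType A') (h : 'rV[A]_n -> N) (w : 'rV[A']_n) : N :=
  \sum_(j < n) w 0 j *: h 'e_j.

Lemma row_ext_linear (N : lmodType A') (h : 'rV[A]_n -> N) : is_linear (row_ext h).
Proof.
split=> [x y|a x]; rewrite /row_ext.
  by rewrite -big_split; apply: eq_bigr => j _; rewrite mxE scalerDl.
by rewrite scaler_sumr; apply: eq_bigr => j _; rewrite mxE scalerA.
Qed.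

Lemma row_extE (N : lmodType A') (h : 'rV[A]_n -> N) :
  is_semilinear f h -> forall v, row_ext h (map_mx f v) = h v.
Proof.
move=> hs v; rewrite /row_ext {2}(row_sum_delta v) (is_semilinear_sum hs).
by apply: eq_bigr => j _; rewrite mxE; case: hs => _ ->.
Qed.

Lemma row_linear_ext (N : lmodType A') (h1 h2 : 'rV[A']_n -> N) :
  is_linear h1 -> is_linear h2 ->
  (forall v, h1 (map_mx f v) = h2 (map_mx f v)) -> h1 =1 h2.
Proof.
move=> h1l h2l e x; rewrite (row_sum_delta x) (is_linear_sum h1l) (is_linear_sum h2l).
apply: eq_bigr => j _; case: h1l => _ ->; case: h2l => _ ->.
by rewrite -(map_delta_mx f) e.
Qed.

Lemma base_change_row : is_base_change f (map_mx f : 'rV[A]_n -> 'rV[A']_n).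
Proof.
split; first by split=> [x y|a x]; [exact: map_mxD | exact: map_mxZ].
move=> N h hs; split; last exact: row_linear_ext.
by exists (row_ext h); split; [exact: row_ext_linear | exact: row_extE].
Qed.

End RowBaseChange.

Section FlatKernel.
Variables (A A' : comPzRingType) (f : {rmorphism A -> A'}) (p q : nat) (R : 'M[A]_(p, q)).

Definition lker_submod : submod 'rV[A]_p.
Proof.
apply: (@Submod _ _ (fun v => v *m R = 0)) => [|x y xR yR|a x xR].
- by rewrite mul0mx.
- by rewrite mulmxDl xR yR addr0.
- by rewrite -scalemxAl xR scaler0.
Defined.

Definition lker_image (w : 'rV[A']_p) := exists v, v *m R = 0 /\ w = map_mx f v.

Let K := lker_submod.
Let K' := lspan_submod lker_image.

Definition lker_quot_map (u : qmod K) : qmod K' := qproj K' (map_mx f (qrepr u)).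

Lemma lker_quot_mapE v : lker_quot_map (qproj K v) = qproj K' (map_mx f v).
Proof.
apply/qprojE; rewrite -(additiveB (@map_mxD _ _ f 1 p)).
by apply: lspan_gen; exists (qrepr (qproj K v) - v); split => //; exact: (qrepr_proj K v).
Qed.

Lemma base_change_lker_quot : is_base_change f lker_quot_map.
Proof.
split.
  split=> [u1 u2|a u].
    case: (qproj_surj u1) (qproj_surj u2) => [x1 ->] [x2 ->].
    by rewrite -qprojD !lker_quot_mapE map_mxD qprojD.
  by case: (qproj_surj u) => x ->; rewrite -qprojZ !lker_quot_mapE map_mxZ qprojZ.
move=> N h [hD hZ].
pose hK v := h (qproj K v).
have hKs : is_semilinear f hK.
  by split=> [x y|a x]; rewrite /hK ?qprojD ?qprojZ ?hD ?hZ.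
have [eD eZ] := row_ext_linear hK.
have eK' : forall w, K' w -> row_ext hK w = 0.
  apply: linear_lspan0 => // w [v [Kv ->]].
  by rewrite row_extE // /hK (proj2 (qproj_eq0 K v) Kv) (additive0 hD).
split.
  exists (qdesc (S := K') (row_ext hK)); split; first exact: qdesc_linear.
  by move=> u; case: (qproj_surj u) => x ->; rewrite lker_quot_mapE qdescE // row_extE.
move=> h1 h2 [h1D h1Z] [h2D h2Z] e u; case: (qproj_surj u) => w ->.
have h1l : is_linear (fun w => h1 (qproj K' w)).
  by split=> [x y|a x]; rewrite ?qprojD ?qprojZ ?h1D ?h1Z.
have h2l : is_linear (fun w => h2 (qproj K' w)).
  by split=> [x y|a x]; rewrite ?qprojD ?qprojZ ?h2D ?h2Z.
apply: (row_linear_ext (f := f) h1l h2l _ w) => v.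
by rewrite /= -!lker_quot_mapE e.
Qed.

(* Flatness applied to the injection [A^p / K -> A^q] induced by [R]. *)
Lemma flat_lker : flat f -> forall w, w *m map_mx f R = 0 -> lspan lker_image w.
Proof.
move=> fl w wR.
have mD : forall x y : 'rV[A]_p, (x + y) *m R = x *m R + y *m R by move=> x y; exact: mulmxDl.
have mZ : forall a (x : 'rV[A]_p), (a *: x) *m R = a *: (x *m R) by move=> a x; rewrite scalemxAl.
have m'D : forall x y : 'rV[A']_p, (x + y) *m map_mx f R = x *m map_mx f R + y *m map_mx f R.
  by move=> x y; exact: mulmxDl.
have m'Z : forall a (x : 'rV[A']_p), (a *: x) *m map_mx f R = a *: (x *m map_mx f R).
  by move=> a x; rewrite scalemxAl.
have mK : forall x, K x -> x *m R = 0 by [].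
have m'K' : forall x, K' x -> x *m map_mx f R = 0.
  by apply: linear_lspan0 => // y [v [vR ->]]; rewrite -map_mxM vR map_mx0.
pose u := qdesc (S := K) (mulmxr R).
pose u' := qdesc (S := K') (mulmxr (map_mx f R)).
have uinj : injective u.
  move=> u1 u2; case: (qproj_surj u1) (qproj_surj u2) => [x1 ->] [x2 ->].
  rewrite /u !(qdescE mD mK) => e; apply/qprojE.
  by rewrite /= /lker_submod /= mulmxBl e subrr.
have compat : forall v, u' (lker_quot_map v) = map_mx f (u v).
  move=> v; case: (qproj_surj v) => x ->.
  by rewrite lker_quot_mapE /u /u' (qdescE m'D m'K') (qdescE mD mK) /= map_mxM.
have u'inj := fl _ _ _ (qdesc_linear mD mZ mK) uinj _ _ _ _
  base_change_lker_quot (base_change_row f q) _ (qdesc_linear m'D m'Z m'K') compat.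
have : qproj K' w = qproj K' 0.
  by apply: u'inj; rewrite /u' !(qdescE m'D m'K') /= wR mul0mx.
by move/qprojE; rewrite subr0.
Qed.

End FlatKernel.

(** * Free modules *)

Section FreeCoordinates.
Variables (B : comPzRingType) (N : lmodType B) (I : eqType) (e : I -> N).

(* A formal linear combination is a list of (index, coefficient) pairs, possibly with repetitions. *)
Definition lincomb (l : seq (I * B)) : N := \sum_(x <- l) x.2 *: e x.1.
Definition coef_of (l : seq (I * B)) (i : I) : B := \sum_(x <- l | x.1 == i) x.2.

Lemma lincomb_cat l1 l2 : lincomb (l1 ++ l2) = lincomb l1 + lincomb l2.
Proof. by rewrite /lincomb big_cat. Qed.

Lemma lincomb_regroup l (u : seq I) : uniq u -> (forall x, x \in l -> x.1 \in u) ->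
  lincomb l = \sum_(i <- u) coef_of l i *: e i.
Proof.
move=> uu lu; rewrite /lincomb /coef_of.
under [RHS]eq_bigr => i _ do rewrite scaler_suml big_mkcond /=.
rewrite exchange_big /= big_seq_cond [RHS]big_seq_cond; apply: eq_bigr => x /andP[xl _].
rewrite (bigD1_seq x.1) ?lu //= eqxx big1 ?addr0 // => i.
by rewrite eq_sym => /negPf ->.
Qed.

Lemma coef_of_out l i : (forall x, x \in l -> x.1 != i) -> coef_of l i = 0.
Proof.
move=> li; rewrite /coef_of big_seq_cond big1 // => x /andP[xl /eqP xi].
by move: (li x xl); rewrite xi eqxx.
Qed.

Hypotheses (e_span : forall n : N, exists (r : seq I) (c : I -> B), n = \sum_(i <- r) c i *: e i)
  (e_free : forall (r : seq I) (c : I -> B), uniq r ->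
     \sum_(i <- r) c i *: e i = 0 -> forall i, i \in r -> c i = 0).

Lemma lincomb_inj_coef l1 l2 : lincomb l1 = lincomb l2 -> coef_of l1 =1 coef_of l2.
Proof.
move=> el i; pose u := undup [seq x.1 | x <- l1 ++ l2].
have uu : uniq u by exact: undup_uniq.
have l1u x : x \in l1 -> x.1 \in u by move=> xl; rewrite mem_undup map_f // mem_cat xl.
have l2u x : x \in l2 -> x.1 \in u by move=> xl; rewrite mem_undup map_f // mem_cat xl orbT.
have e0 : \sum_(k <- u) (coef_of l1 k - coef_of l2 k) *: e k = 0.
  under eq_bigr => k _ do rewrite scalerBl.
  by rewrite sumrB -lincomb_regroup // -lincomb_regroup // el subrr.
case: (boolP (i \in u)) => iu; first by apply/eqP; rewrite -subr_eq0 (e_free uu e0 iu).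
by rewrite !coef_of_out // => x xl; apply: contraNneq iu => <-; [exact: l2u | exact: l1u].
Qed.

Lemma lincomb_surj n : exists l, n = lincomb l.
Proof. by have [r [c ->]] := e_span n; exists [seq (k, c k) | k <- r]; rewrite /lincomb big_map. Qed.

Definition coords (n : N) := projT1 (cid (lincomb_surj n)).

Lemma coordsK n : lincomb (coords n) = n.
Proof. by rewrite /coords; case: cid. Qed.

Definition coord (i : I) (n : N) : B^o := coef_of (coords n) i.

Lemma coord_linear i : is_linear (coord i).
Proof.
split=> [x y|a x]; rewrite /coord.
  rewrite (@lincomb_inj_coef _ (coords x ++ coords y)); first by rewrite /coef_of big_cat.
  by rewrite lincomb_cat !coordsK.
rewrite (@lincomb_inj_coef _ [seq (x.1, a * x.2) | x <- coords x]).
  by rewrite /coef_of big_map scaler_sumr.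
rewrite coordsK -{1}(coordsK x) /lincomb big_map scaler_sumr.
by apply: eq_bigr => y _; rewrite scalerA.
Qed.

Lemma coord_eq0 n : (forall i, coord i n = 0) -> n = 0.
Proof.
move=> n0; rewrite -(coordsK n) (@lincomb_regroup _ (undup [seq x.1 | x <- coords n])).
- by rewrite big1 // => i _; rewrite -/(coord i n) n0 scale0r.
- exact: undup_uniq.
by move=> x xl; rewrite mem_undup map_f.
Qed.

End FreeCoordinates.

Lemma free_dual_separates (B : comPzRingType) (N : lmodType B) : Defs.free N ->
  forall n, (forall phi : N -> B^o, is_linear phi -> phi n = 0) -> n = 0.
Proof.
case=> I [e [e_span e_free]] n n0; apply: (@coord_eq0 _ _ _ _ e_span) => i.
exact/n0/(@coord_linear _ _ _ _ e_span e_free).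
Qed.

(** * Prime ideals *)

Section PrimeIdeal.
Variable R : comPzRingType.

Lemma maximal_ideal_prime (P : R -> Prop) : is_ideal P -> ~ P 1 ->
  (forall Q, is_ideal Q -> ~ Q 1 -> (forall x, P x -> Q x) -> forall x, Q x -> P x) ->
  is_prime_ideal P.
Proof.
move=> [P0 PD PZ] P1 Pmax; split=> // a b Pab.
case: (lem (P a)) => Pa; [by left | right].
pose Q x := exists y r, P y /\ x = y + r * a.
case: (lem (Q 1)) => [[y [r [Py e1]]]|Q1].
  have -> : b = b * y + r * (a * b) by rewrite -[LHS]mulr1 e1; ring.
  by apply: PD; apply: PZ.
have Qid : is_ideal Q.
  split; first by exists 0, 0; rewrite mul0r addr0.
    move=> _ _ [y [r [Py ->]]] [y' [r' [Py' ->]]].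
    by exists (y + y'), (r + r'); rewrite mulrDl addrACA; split=> //; apply: PD.
  move=> c _ [y [r [Py ->]]]; exists (c * y), (c * r).
  by rewrite mulrDr mulrA; split=> //; apply: PZ.
exfalso; apply/Pa/(Pmax Q Qid Q1) => [x Px|]; first by exists x, 0; rewrite mul0r addr0.
by exists 0, 1; rewrite add0r mul1r.
Qed.

Section AboveIdeal.
Variable J : R -> Prop.
Hypotheses (Jid : is_ideal J) (J1 : ~ J 1).

Let proper_above := {I : R -> Prop | [/\ is_ideal I, ~ I 1 & forall x, J x -> I x]}.
Let sub_ideal (I1 I2 : proper_above) : bool := `[< forall x, sval I1 x -> sval I2 x >].

Let chain_ub (C : set proper_above) :
  total_on C sub_ideal -> exists U, forall I, C I -> sub_ideal I U.
Proof.
move=> Ctot; pose U x := J x \/ exists I, C I /\ sval I x.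
have [J0 JD JZ] := Jid.
have Uid : is_ideal U.
  split; first by left.
    move=> x y [Jx|[I [CI Ix]]] [Jy|[I' [CI' I'y]]]; first by left; apply: JD.
    - have [[_ I'D _] _ JI'] := svalP I'.
      by right; exists I'; split=> //; apply: I'D => //; apply: JI'.
    - have [[_ ID _] _ JI] := svalP I.
      by right; exists I; split=> //; apply: ID => //; apply: JI.
    - case: (Ctot _ _ CI CI') => /asboolP II'.
        have [[_ I'D _] _ _] := svalP I'.
        by right; exists I'; split=> //; apply: I'D => //; apply: II'.
      have [[_ ID _] _ _] := svalP I.
      by right; exists I; split=> //; apply: ID => //; apply: II'.
  move=> r x [Jx|[I [CI Ix]]]; first by left; apply: JZ.
  by have [[_ _ IZ] _ _] := svalP I; right; exists I; split=> //; apply: IZ.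
have U1 : ~ U 1 by case=> [//|[I [_ I1]]]; case: (svalP I) => _ /(_ I1).
exists (exist _ U (And3 Uid U1 (fun x Jx => or_introl Jx))).
by move=> I CI; apply/asboolP => x Ix; right; exists I.
Qed.

Lemma prime_ideal_above : exists P, is_prime_ideal P /\ forall x, J x -> P x.
Proof.
have J_above : proper_above by exists J.
have sub_refl I : sub_ideal I I by apply/asboolP.
have sub_trans I1 I2 I3 : sub_ideal I1 I2 -> sub_ideal I2 I3 -> sub_ideal I1 I3.
  by move=> /asboolP I12 /asboolP I23; apply/asboolP => x /I12 /I23.
have [P Pmax] := ZL_preorder J_above sub_refl sub_trans chain_ub.
have [Pid P1 JP] := svalP P; exists (sval P); split=> //.
apply: maximal_ideal_prime => // Q Qid Q1 PQ.
have JQ x : J x -> Q x by move=> /JP /PQ.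
have /asboolP := Pmax (exist _ Q (And3 Qid Q1 JQ)) (asboolT PQ); exact.
Qed.

End AboveIdeal.

Lemma prime_not1 P : is_prime_ideal P -> ~ P (1 : R).
Proof. by case. Qed.

Lemma prime_notM P (s t : R) : is_prime_ideal P -> ~ P s -> ~ P t -> ~ P (s * t).
Proof. by case=> _ _ Pst Ps Pt /Pst []. Qed.

Lemma prime_not_prod P (I : Type) (r : seq I) (Q : pred I) (F : I -> R) : is_prime_ideal P ->
  (forall i, ~ P (F i)) -> ~ P (\prod_(i <- r | Q i) F i).
Proof.
by move=> Pp PF; apply: (big_ind (fun x => ~ P x)) => // [|x y]; [exact: prime_not1 | exact: prime_notM].
Qed.

End PrimeIdeal.

(** * Localization of modules *)

Section ModuleLocalization.
Variables (R B : comPzRingType) (P : R -> Prop) (g : {rmorphism R -> B}).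
Hypotheses (P_prime : is_prime_ideal P) (g_loc : is_localization_at P g).
Variable X : lmodType R.

Definition denom := {s : R | ~ P s}.
Definition denom1 : denom := exist _ 1 (prime_not1 P_prime).
Definition denomM (s t : denom) : denom :=
  exist _ (sval s * sval t) (prime_notM P_prime (svalP s) (svalP t)).

Definition frac_eq (x y : X * denom) :=
  exists u, ~ P u /\ (u * sval y.2) *: x.1 = (u * sval x.2) *: y.1.

Lemma frac_eq_refl x : frac_eq x x.
Proof. by exists 1; split=> //; exact: prime_not1. Qed.

Lemma frac_eq_sym x y : frac_eq x y -> frac_eq y x.
Proof. by case=> u [Pu e]; exists u. Qed.

Lemma frac_eq_trans x y z : frac_eq x y -> frac_eq y z -> frac_eq x z.
Proof.
case: x y z => [x s] [y t] [z w] [u [Pu e1]] [v [Pv e2]] /=; simpl in *.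
exists (u * v * sval t); split; first exact: (prime_notM P_prime (prime_notM P_prime Pu Pv) (svalP t)).
have -> : (u * v * sval t * sval w) *: x = (v * sval w) *: ((u * sval t) *: x).
  by rewrite scalerA; congr (_ *: _); ring.
rewrite e1 scalerA.
have -> : (u * v * sval t * sval s) *: z = (u * sval s) *: ((v * sval t) *: z).
  by rewrite scalerA; congr (_ *: _); ring.
by rewrite -e2 scalerA; congr (_ *: _); ring.
Qed.

Definition lfrac := quot frac_eq.
HB.instance Definition _ := gen_eqMixin lfrac.
HB.instance Definition _ := gen_choiceMixin lfrac.

Definition frac (x : X) (s : denom) : lfrac := class_of frac_eq (x, s).
Definition frac_repr (u : lfrac) : X * denom := class_repr u.

Lemma fracE x s y t : frac x s = frac y t <-> frac_eq (x, s) (y, t).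
Proof. exact: (class_ofE frac_eq_refl frac_eq_sym frac_eq_trans). Qed.

Lemma frac_reprK u : frac (frac_repr u).1 (frac_repr u).2 = u.
Proof. by rewrite /frac /frac_repr -surjective_pairing class_reprK. Qed.

Lemma frac_surj u : exists x s, u = frac x s.
Proof. by exists (frac_repr u).1, (frac_repr u).2; rewrite frac_reprK. Qed.

Lemma frac_cross x s y t : sval t *: x = sval s *: y -> frac x s = frac y t.
Proof. by move=> e; apply/fracE; exists 1; split; [exact: prime_not1 | rewrite /= !mul1r]. Qed.

Lemma frac_repr_eq x s : frac_eq (frac_repr (frac x s)) (x, s).
Proof.
by rewrite [frac_repr _]surjective_pairing; apply/fracE; rewrite frac_reprK.
Qed.

Let fadd (u v : lfrac) := let (x, s) := frac_repr u in let (y, t) := frac_repr v in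
  frac (sval t *: x + sval s *: y) (denomM s t).

Let fadd_eq x s x' s' y t y' t' : frac_eq (x, s) (x', s') -> frac_eq (y, t) (y', t') ->
  frac (sval t *: x + sval s *: y) (denomM s t) =
  frac (sval t' *: x' + sval s' *: y') (denomM s' t').
Proof.
move=> [u [Pu e1]] [v [Pv e2]]; simpl in *; apply/fracE; exists (u * v).
split; first exact: prime_notM. rewrite /=.
have -> : (u * v * (sval s' * sval t')) *: (sval t *: x + sval s *: y) =
   (v * sval t * sval t') *: ((u * sval s') *: x) + (u * sval s * sval s') *: ((v * sval t') *: y).
  by rewrite scalerDr !scalerA; congr (_ *: _ + _ *: _); ring.
by rewrite e1 e2 !scalerA scalerDr !scalerA; congr (_ *: _ + _ *: _); ring.
Qed.

Let faddE x s y t : fadd (frac x s) (frac y t) = frac (sval t *: x + sval s *: y) (denomM s t).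
Proof.
rewrite /fadd; case: (frac_repr (frac x s)) (frac_repr_eq x s) => x' s' ex.
by case: (frac_repr (frac y t)) (frac_repr_eq y t) => y' t' ey; apply: fadd_eq.
Qed.

Let fopp (u : lfrac) := frac (- (frac_repr u).1) (frac_repr u).2.

Let foppE x s : fopp (frac x s) = frac (- x) s.
Proof.
have [u [Pu e]] := frac_repr_eq x s.
by apply/fracE; exists u; split=> //=; rewrite !scalerN e.
Qed.

Let faddA : associative fadd.
Proof.
move=> u v w; case: (frac_surj u) (frac_surj v) (frac_surj w) => [x [s ->]] [y [t ->]] [z [r ->]].
rewrite !faddE; apply: frac_cross => /=.
by rewrite !scalerDr !scalerA !addrA; congr (_ *: _ + _ *: _ + _ *: _); ring.
Qed.

Let faddC : commutative fadd.
Proof.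
move=> u v; case: (frac_surj u) (frac_surj v) => [x [s ->]] [y [t ->]].
by rewrite !faddE; apply: frac_cross => /=; rewrite addrC mulrC.
Qed.

Let fadd0 : left_id (frac 0 denom1) fadd.
Proof.
move=> u; case: (frac_surj u) => x [s ->]; rewrite faddE; apply: frac_cross => /=.
by rewrite scaler0 add0r !scale1r mul1r.
Qed.

Let faddN : left_inverse (frac 0 denom1) fopp fadd.
Proof.
move=> u; case: (frac_surj u) => x [s ->]; rewrite foppE faddE; apply: frac_cross => /=.
by rewrite scaler0 scalerN addNr scaler0.
Qed.

HB.instance Definition _ := GRing.isZmodule.Build lfrac faddA faddC fadd0 faddN.

Lemma fracD x s y t : frac x s + frac y t = frac (sval t *: x + sval s *: y) (denomM s t).
Proof. exact: faddE. Qed.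

(* A scalar [b] of [B] acts through a chosen fraction [a / t] with [b * g t = g a]. *)
Let scalar_frac (b : B) : exists x : R * denom, b * g (sval x.2) = g x.1.
Proof.
have [_ g_frac _] := g_loc; have [a [t [Pt e]]] := g_frac b.
by exists (a, exist _ t Pt).
Qed.

Let num_den (b : B) : R * denom := projT1 (cid (scalar_frac b)).

Let num_denP b : b * g (sval (num_den b).2) = g (num_den b).1.
Proof. by rewrite /num_den; case: cid. Qed.

Let fscale (b : B) (u : lfrac) :=
  frac ((num_den b).1 *: (frac_repr u).1) (denomM (num_den b).2 (frac_repr u).2).

Let fscaleE b a t x s : b * g (sval t) = g a -> fscale b (frac x s) = frac (a *: x) (denomM t s).
Proof.
move=> e; rewrite /fscale; set a0 := (num_den b).1; set t0 := (num_den b).2.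
have e0 : b * g (sval t0) = g a0 by exact: num_denP.
have [u [Pu eu]] := frac_repr_eq x s.
have [_ _ g_ker] := g_loc.
have g0 : g (a0 * sval t - a * sval t0) = 0 by rewrite rmorphB !rmorphM -e -e0; ring.
have [w [Pw ew]] := g_ker _ g0.
apply/fracE; exists (w * u); split; first exact: prime_notM.
rewrite /=; set x0 := (frac_repr (frac x s)).1; set s0 := (frac_repr (frac x s)).2.
have ew' : w * (a0 * sval t) = w * (a * sval t0).
  by apply/eqP; rewrite -subr_eq0 -mulrBr ew.
have -> : (w * u * (sval t * sval s)) *: (a0 *: x0) = (w * (a0 * sval t)) *: ((u * sval s) *: x0).
  by rewrite !scalerA; congr (_ *: _); ring.
by rewrite ew' eu !scalerA; congr (_ *: _); ring.
Qed.

Let fscaleA a b u : fscale a (fscale b u) = fscale (a * b) u.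
Proof.
case: (frac_surj u) => x [s ->].
rewrite (fscaleE _ _ (num_denP b)) (fscaleE _ _ (num_denP a)).
have e : a * b * g (sval (denomM (num_den a).2 (num_den b).2)) = g ((num_den a).1 * (num_den b).1).
  by rewrite /= !rmorphM -num_denP -num_denP; ring.
by rewrite (fscaleE _ _ e); apply: frac_cross => /=; rewrite !scalerA; congr (_ *: _); ring.
Qed.

Let fscale1 : left_id 1 fscale.
Proof.
move=> u; case: (frac_surj u) => x [s ->].
have e : 1 * g (sval denom1) = g 1 by rewrite mul1r.
by rewrite (fscaleE _ _ e); apply: frac_cross => /=; rewrite scale1r mul1r.
Qed.

Let fscaleDr : right_distributive fscale +%R.
Proof.
move=> b u v; case: (frac_surj u) (frac_surj v) => [x [s ->]] [y [t ->]].
rewrite fracD !(fscaleE _ _ (num_denP b)) fracD; apply: frac_cross => /=.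
by rewrite !scalerDr !scalerA; congr (_ *: _ + _ *: _); ring.
Qed.

Let fscaleDl u : {morph fscale^~ u : a b / a + b}.
Proof.
move=> a b; case: (frac_surj u) => x [s ->].
set na := num_den a; set nb := num_den b.
have e : (a + b) * g (sval (denomM na.2 nb.2)) = g (na.1 * sval nb.2 + nb.1 * sval na.2).
  by rewrite /= rmorphD !rmorphM -!num_denP; ring.
rewrite (fscaleE _ _ e) !(fscaleE _ _ (num_denP _)) -/na -/nb fracD; apply: frac_cross => /=.
by rewrite !scalerDr !scalerA -scalerDl; congr (_ *: _); ring.
Qed.

HB.instance Definition _ :=
  GRing.Zmodule_isLmodule.Build B lfrac fscaleA fscale1 fscaleDr fscaleDl.

Definition frac1 (x : X) : lfrac := frac x denom1.

Lemma frac1_semilinear : is_semilinear g frac1.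
Proof.
split=> [x y|a x]; first by rewrite /frac1 fracD; apply: frac_cross; rewrite /= !mul1r !scale1r.
have e : g a * g (sval denom1) = g a by rewrite rmorph1 mulr1.
rewrite /frac1; change (frac (a *: x) denom1 = fscale (g a) (frac x denom1)).
by rewrite (fscaleE _ _ e); apply: frac_cross => /=; rewrite mul1r.
Qed.

Lemma frac1_eq0 x : frac1 x = 0 -> exists s, ~ P s /\ s *: x = 0.
Proof. by move=> /fracE [u [Pu e]]; exists u; split=> //; move: e => /=; rewrite !mulr1 scaler0. Qed.

(* The kernel of any base change along [g] is the kernel of [x |-> x / 1]. *)
Lemma localization_base_change_eq0 (N : lmodType B) (j : X -> N) :
  is_base_change g j -> forall x, j x = 0 -> exists s, ~ P s /\ s *: x = 0.
Proof.
case=> _ j_univ x jx; have [[h [[hD _] hj]] _] := j_univ _ _ frac1_semilinear.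
by apply: frac1_eq0; rewrite -hj jx (additive0 hD).
Qed.

End ModuleLocalization.

Section LocalizationDenominators.
Variables (R B : comPzRingType) (P : R -> Prop) (g : {rmorphism R -> B}).
Hypotheses (P_prime : is_prime_ideal P) (g_loc : is_localization_at P g).

Lemma common_denominator n (b : 'rV[B]_n) :
  exists s (w : 'rV[R]_n), ~ P s /\ map_mx g w = g s *: b.
Proof.
have [_ g_frac _] := g_loc.
have [F FP] : {F : 'I_n -> R * R & forall i, ~ P (F i).2 /\ b 0 i * g (F i).2 = g (F i).1}.
  apply: (choice (P := fun i x => ~ P x.2 /\ b 0 i * g x.2 = g x.1)) => i.
  by have [a [t [Pt e]]] := g_frac (b 0 i); exists (a, t).
exists (\prod_i (F i).2), (\row_i ((F i).1 * \prod_(k | k != i) (F k).2)); split.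
  by apply: prime_not_prod => // i; case: (FP i).
apply/rowP => i; rewrite !mxE [X in _ = g X * _](bigD1 i) //= !rmorphM -(proj2 (FP i)).
ring.
Qed.

Lemma common_annihilator n (u : 'rV[R]_n) :
  map_mx g u = 0 -> exists s, ~ P s /\ s *: u = 0.
Proof.
move=> gu0; have [_ _ g_ker] := g_loc.
have [F FP] : {F : 'I_n -> R & forall i, ~ P (F i) /\ F i * u 0 i = 0}.
  apply: (choice (P := fun i t => ~ P t /\ t * u 0 i = 0)) => i; apply: g_ker.
  by have := congr1 (fun w : 'rV[B]_n => w 0 i) gu0; rewrite !mxE.
exists (\prod_i F i); split; first by apply: prime_not_prod => // i; case: (FP i).
by apply/rowP => i; rewrite !mxE (bigD1 i) //= mulrAC (proj2 (FP i)) mul0r.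
Qed.

End LocalizationDenominators.

Section LocalSemilinearForms.
Variables (A A' B : comPzRingType) (f : {rmorphism A -> A'}) (P : A' -> Prop)
  (g : {rmorphism A' -> B}).
Hypotheses (f_flat : flat f) (P_prime : is_prime_ideal P) (g_loc : is_localization_at P g).
Variables (M : lmodType A) (p q : nat) (e : 'I_p -> M) (R : 'M[A]_(p, q)) (h : M -> B).
Hypotheses (R_rel : forall j, gencomb e (col j R) = 0)
  (hD : forall x y, h (x + y) = h x + h y) (hZ : forall a x, h (a *: x) = g (f a) * h x).

Let b := \row_i h (e i).

Lemma semilinear_gencomb c : h (gencomb e c) = (b *m map_mx (g \o f) c) 0 0.
Proof.
rewrite /gencomb (additive_sum hD) !mxE; apply: eq_bigr => i _.
by rewrite hZ !mxE mulrC.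
Qed.

Lemma semilinear_lker : exists s (w : 'rV[A']_p),
  [/\ ~ P s, w *m map_mx f R = 0 & map_mx g w = g s *: b].
Proof.
have [s0 [w0 [Ps0 gw0]]] := common_denominator P_prime g_loc b.
have bR : b *m map_mx (g \o f) R = 0.
  apply/rowP => j; rewrite !mxE -[RHS](additive0 hD) -(R_rel j) semilinear_gencomb !mxE.
  by apply: eq_bigr => i _; rewrite !mxE.
have [t [Pt tu]] : exists t, ~ P t /\ t *: (w0 *m map_mx f R) = 0.
  apply: (common_annihilator P_prime g_loc).
  by rewrite map_mxM gw0 -map_mx_comp -scalemxAl bR scaler0.
exists (t * s0), (t *: w0); split; first exact: prime_notM.
  by rewrite -scalemxAl.
by rewrite map_mxZ gw0 scalerA rmorphM.
Qed.

Variable (m1 m2 : M).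
Hypotheses (e_span : forall m, exists c, m = gencomb e c)
  (R_span : forall c, gencomb e c = 0 -> lspan (fun r => exists j, r = col j R) c)
  (dual_eq : forall phi : {scalar M}, phi m1 = phi m2).

Lemma semilinear_dual_eq : h m1 = h m2.
Proof.
have [c1 m1c] := e_span m1; have [c2 m2c] := e_span m2.
pose d := c1 - c2.
have dm : gencomb e d = m1 - m2 by rewrite gencombD (additiveN (@gencombD _ _ _ e)) -m1c -m2c.
have [s [w [Ps wR gw]]] := semilinear_lker.
have wd : w *m map_mx f d = 0.
  apply: (linear_lspan0 (h := mulmxr (map_mx f d)) _ _ _ (flat_lker f_flat wR)).
  - by move=> x y; exact: mulmxDl.
  - by move=> a x; rewrite /= scalemxAl.
  by move=> _ [v [vR ->]] /=; rewrite -map_mxM (lker_scalar_eq e_span R_span dual_eq vR dm) map_mx0.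
have : (map_mx g (w *m map_mx f d)) 0 0 = g s * (h m1 - h m2).
  rewrite map_mxM gw -map_mx_comp -scalemxAl mxE -semilinear_gencomb dm.
  by rewrite (additiveB hD).
rewrite wd map_mx0 mxE => /esym.
have [g_unit _ _] := g_loc; have [u su] := g_unit s Ps.
move=> /(congr1 (GRing.mul u)); rewrite mulr0 mulrA [u * _]mulrC su mul1r.
by move/eqP; rewrite subr_eq0 => /eqP.
Qed.

End LocalSemilinearForms.

Lemma semilinear_flat_local_eq (A A' B : comPzRingType) (f : {rmorphism A -> A'})
    (P : A' -> Prop) (g : {rmorphism A' -> B}) (M : lmodType A) (h : M -> B) :
  noetherian A -> fin_gen M -> flat f -> is_prime_ideal P -> is_localization_at P g ->
  (forall x y, h (x + y) = h x + h y) -> (forall a x, h (a *: x) = g (f a) * h x) ->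
  forall m1 m2, (forall phi : {scalar M}, phi m1 = phi m2) -> h m1 = h m2.
Proof.
move=> HA [s s_span] f_flat P_prime g_loc hD hZ m1 m2 dual_eq.
pose e (i : 'I_(size s)) := s`_i.
have e_span m : exists c, m = gencomb e c.
  have [c ->] := s_span m; exists (\col_i c i).
  by apply: eq_bigr => i _; rewrite mxE.
have [q [R [R_rel R_span]]] := relation_matrix e HA.
exact: (semilinear_dual_eq f_flat P_prime g_loc R_rel hD hZ e_span R_span dual_eq).
Qed.

Lemma eq0_of_local_eq0 (R : comPzRingType) (M : lmodType R) (x : M) :
  (forall P, is_prime_ideal P -> exists (B : comPzRingType) (g : {rmorphism R -> B})
     (N : lmodType B) (j : M -> N),
     [/\ is_localization_at P g, is_base_change g j & j x = 0]) -> x = 0.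
Proof.
move=> x_loc0; case: (lem (x = 0)) => // x_neq0; exfalso.
pose ann a := a *: x = 0.
have ann_ideal : is_ideal ann.
  split=> [|a b ax bx|r a ax]; rewrite /ann ?scale0r //; first by rewrite scalerDl ax bx addr0.
  by rewrite -scalerA ax scaler0.
have ann1 : ~ ann 1 by rewrite /ann scale1r.
have [P [P_prime annP]] := prime_ideal_above ann_ideal ann1.
have [B [g [N [j [g_loc j_bc jx]]]]] := x_loc0 P P_prime.
have [s [Ps sx]] := localization_base_change_eq0 P_prime g_loc j_bc jx.
exact/Ps/annP.
Qed.

Lemma bidual_ev_eq_of_base_change (A A' : comPzRingType) (f : {rmorphism A -> A'})
    (M : lmodType A) (M' : lmodType A') (iota : M -> M') :
  injective f -> is_base_change f iota ->
  forall m1 m2, iota m1 = iota m2 -> bidual_ev m1 = bidual_ev m2.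
Proof.
move=> f_inj [_ iota_univ] m1 m2 im12; apply: funext => phi; apply: f_inj.
have f_phi : is_semilinear f (fun m => f (phi m) : A'^o).
  by split=> [x y|a x]; rewrite ?raddfD ?rmorphD // linearZ /= rmorphM.
have [[h [_ h_iota]] _] := iota_univ _ _ f_phi.
by rewrite /bidual_ev -!h_iota im12.
Qed.

Unset Implicit Arguments.

Theorem proposition1p2 (A A' : comPzRingType) (f : {rmorphism A -> A'})
    (M : lmodType A) (M' : lmodType A') (iota : M -> M') :
  noetherian A -> fin_gen M ->
  injective f -> flat f ->
  is_base_change f iota -> locally_free M' ->
  forall m1 m2 : M, bidual_ev m1 = bidual_ev m2 <-> iota m1 = iota m2.
Proof.
move=> HA M_fg f_inj f_flat iota_bc M'_lf m1 m2.
split; last exact: (bidual_ev_eq_of_base_change f_inj iota_bc).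
move=> ev12; apply/eqP; rewrite -subr_eq0; apply/eqP.
apply: eq0_of_local_eq0 => P P_prime.
have [B [g [N [j [g_loc j_bc N_free]]]]] := M'_lf P P_prime.
exists B, g, N, j; split=> //.
apply: (free_dual_separates N_free) => phi [phiD phiZ].
have [[iD iZ] _] := iota_bc; have [[jD jZ] _] := j_bc.
rewrite (additiveB jD) (additiveB phiD); apply/eqP; rewrite subr_eq0; apply/eqP.
apply: (semilinear_flat_local_eq (h := fun m => phi (j (iota m))) HA M_fg f_flat P_prime g_loc).
- by move=> x y; rewrite iD jD phiD.
- by move=> a x; rewrite iZ jZ phiZ.
by move=> psi; exact: (congr1 (fun F => F psi) ev12).
Qed.
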